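(* Let $A$ be an $n\times n$ real matrix with $n$ distinct (possibly complex) eigenvalues $\lambda_1,\dots,\lambda_n$. For each $i$, let $x_i\in\mathbb{C}^n$ be the left eigenvector of $A$ associated with $\lambda_i$ (i.e. $x_i^H A=\lambda_i x_i^H$) whose Euclidean norm equals $1$ and whose first nonzero entry (counting from the top) is positive. Let $\mathcal{S}_v\subseteq\{1,2,\dots,n\}$. Then there exists a vector $b\in\mathbb{R}^n$ with $\mathrm{Supp}(b)\subseteq\mathcal{S}_v$ such that the continuous-time linear time-invariant system $\frac{dx(t)}{dt}=Ax(t)+bu(t)$ is controllable if and only if $\mathrm{Supp}(x_i)\cap\mathcal{S}_v\neq\emptyset$ for every $i\in\{1,2,\dots,n\}$.
   Context: For a vector $x$, $\mathrm{Supp}(x)$ denotes the set of row indices $j$ with $x_j\neq 0$. The superscript $H$ denotes conjugate transpose. Controllability of $\frac{dx}{dt}=Ax+Bu$ (equivalently, of the pair $(A,B)$) is the usual notion for continuous-time LTI systems. *)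

From HB Require Import structures.
From mathcomp Require Import all_boot all_order all_algebra.
From mathcomp Require Export complex.
Set Implicit Arguments. Unset Strict Implicit. Unset Printing Implicit Defensive.
Import Order.TTheory GRing.Theory Num.Theory.
Local Open Scope ring_scope.

Definition cplx_mx (R : rcfType) m n (A : 'M[R]_(m, n)) : 'M[R[i]]_(m, n) :=
  map_mx (fun r : R => (r%:C)%C) A.

Definition hermT (C : numClosedFieldType) m n (A : 'M[C]_(m, n)) : 'M[C]_(n, m) :=
  (map_mx (fun z => z^*) A)^T.

Definition supp_sub (T : nzRingType) n (x : 'cV[T]_n) (S : {set 'I_n}) : Prop :=
  forall j : 'I_n, x j 0 != 0 -> j \in S.
Definition supp_meets (T : nzRingType) n (x : 'cV[T]_n) (S : {set 'I_n}) : Prop :=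
  exists2 j : 'I_n, j \in S & x j 0 != 0.

(* Controllability matrix [b, Ab, ..., A^(n-1) b] and controllability of
   dx/dt = A x + b u (Kalman rank condition). *)
Definition ctrb_mx (R : fieldType) n (A : 'M[R]_n) (b : 'cV[R]_n) : 'M[R]_n :=
  \matrix_(i < n, j < n) (A ^+ j *m b) i 0.
Definition controllable (R : fieldType) n (A : 'M[R]_n) (b : 'cV[R]_n) : Prop :=
  \rank (ctrb_mx A b) = n.

Definition unit_norm (C : numClosedFieldType) n (x : 'cV[C]_n) : Prop :=
  \sum_(j < n) `|x j 0| ^+ 2 = 1.
Definition first_nonzero_pos (C : numClosedFieldType) n (x : 'cV[C]_n) : Prop :=
  exists k : 'I_n, 0 < x k 0 /\ forall j : 'I_n, (j < k)%N -> x j 0 = 0.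

From HB Require Import structures.
From mathcomp Require Import all_boot all_order all_algebra.
From mathcomp Require Import complex.

Set Implicit Arguments.
Unset Strict Implicit.
Unset Printing Implicit Defensive.
Import Order.TTheory GRing.Theory Num.Theory.
Local Open Scope ring_scope.

(** Popov-Belevitch-Hautus test for distinct eigenvalues: for left
   eigenvectors y_i with pairwise distinct eigenvalues l_i we have
   y_i^H A^j b = l_i^j (y_i^H b), so the matrix with rows y_i^H times the
   controllability matrix is diag(y_i^H b) times a transposed Vandermonde
   matrix.  Hence (A, b) is controllable iff every y_i^H b is nonzero, which
   for b supported in S_v forces Supp(x_i) to meet S_v.  Conversely, with
   b_k = t^k for k in S_v, y_i^H b is the value at t of a nonzero polynomial,
   and a real t avoiding the roots of all these polynomials works. *)

Section Controllability.
Variables (F : fieldType) (n : nat) (A : 'M[F]_n) (b : 'cV[F]_n).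

Lemma controllable_unitmx : controllable A b <-> ctrb_mx A b \in unitmx.
Proof. by rewrite -row_free_unit; apply: rwP eqP. Qed.

Lemma lefteigen_mulmxX (y : 'rV_n) l :
  y *m A = l *: y -> forall j, y *m A ^+ j = l ^+ j *: y.
Proof.
move=> yA; elim=> [|j IHj]; first by rewrite expr0 mulmx1 scale1r.
by rewrite exprSr mulmxA IHj -scalemxAl yA scalerA exprSr.
Qed.

Lemma lefteigen_mulmx_ctrb (y : 'rV_n) l :
  y *m A = l *: y -> y *m ctrb_mx A b = (y *m b) 0 0 *: \row_j l ^+ j.
Proof.
move=> yA; apply/rowP => j; rewrite !mxE.
transitivity ((y *m (A ^+ j *m b)) 0 0).
  by rewrite mxE; apply: eq_bigr => k _; rewrite mxE.
by rewrite mulmxA (lefteigen_mulmxX yA) -scalemxAl !mxE mulrC.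
Qed.

Lemma controllable_lefteigen_neq0 (y : 'rV_n) l :
  controllable A b -> y != 0 -> y *m A = l *: y -> (y *m b) 0 0 != 0.
Proof.
move=> /controllable_unitmx ctrb_unit y_neq0 yA.
apply: contraNneq y_neq0 => yb0.
have yC0 : y *m ctrb_mx A b = 0.
  by rewrite (lefteigen_mulmx_ctrb yA) yb0 scale0r.
by rewrite -(mulmxK ctrb_unit y) yC0 mul0mx.
Qed.

Lemma lefteigen_ctrb_mx (y : 'I_n -> 'rV_n) (lam : 'I_n -> F) :
    (forall i, y i *m A = lam i *: y i) ->
  (\matrix_i y i) *m ctrb_mx A b =
    diag_mx (\row_i (y i *m b) 0 0) *m (Vandermonde n (\row_i lam i))^T.
Proof.
move=> yA; apply/row_matrixP => i.
rewrite row_mul rowK (lefteigen_mulmx_ctrb (yA i)).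
by apply/rowP => j; rewrite mul_diag_mx !mxE.
Qed.

Lemma controllable_distinct_lefteigen (y : 'I_n -> 'rV_n) (lam : 'I_n -> F) :
    injective lam -> (forall i, y i *m A = lam i *: y i) ->
  (forall i, (y i *m b) 0 0 != 0) -> controllable A b.
Proof.
move=> lam_inj yA yb_neq0; apply/controllable_unitmx.
have : \det ((\matrix_i y i) *m ctrb_mx A b) != 0.
  rewrite (lefteigen_ctrb_mx yA) det_mulmx det_tr det_diag det_Vandermonde.
  rewrite mulf_neq0 //; first by apply/prodf_neq0 => i _; rewrite mxE.
  apply/prodf_neq0 => i _; apply/prodf_neq0 => j ij; rewrite !mxE subr_eq0.
  by apply: contraTneq ij => /lam_inj ->; rewrite ltnn.
by rewrite det_mulmx mulf_eq0 negb_or unitmxE unitfE => /andP[].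
Qed.

End Controllability.

Lemma map_mxX (aR rR : pzSemiRingType) (f : {rmorphism aR -> rR}) n
    (A : 'M[aR]_n) j :
  map_mx f (A ^+ j) = map_mx f A ^+ j.
Proof.
elim: j => [|j IHj]; first by rewrite !expr0 map_mx1.
by rewrite !exprS map_mxM IHj.
Qed.

Lemma map_ctrb_mx (F K : fieldType) (f : {rmorphism F -> K}) n
    (A : 'M[F]_n) (b : 'cV_n) :
  map_mx f (ctrb_mx A b) = ctrb_mx (map_mx f A) (map_mx f b).
Proof.
apply/matrixP => i j; rewrite !mxE -map_mxX rmorph_sum.
by apply: eq_bigr => k _; rewrite rmorphM !mxE.
Qed.

Lemma controllable_map (F K : fieldType) (f : {rmorphism F -> K}) n
    (A : 'M[F]_n) (b : 'cV_n) :
  controllable (map_mx f A) (map_mx f b) <-> controllable A b.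
Proof. by rewrite /controllable -map_ctrb_mx mxrank_map. Qed.

Lemma supp_sub_map (F : fieldType) (K : nzRingType) (f : {rmorphism F -> K}) n
    (b : 'cV_n) (S : {set 'I_n}) :
  supp_sub b S -> supp_sub (map_mx f b) S.
Proof. by move=> b_supp j; rewrite mxE fmorph_eq0; apply: b_supp. Qed.

Lemma supp_meets_of_mulmx (R : nzRingType) n (y : 'rV[R]_n) (b : 'cV_n)
    (S : {set 'I_n}) :
  supp_sub b S -> (y *m b) 0 0 != 0 -> exists2 k, k \in S & y 0 k != 0.
Proof.
move=> b_supp; rewrite mxE => yb_neq0.
have /existsP[k /andP[yk bk]] : [exists k, (y 0 k != 0) && (b k 0 != 0)].
  apply: contraNT yb_neq0 => /existsPn yb0; apply/eqP/big1 => k _.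
  by case/nandP: (yb0 k) => /negbNE/eqP->; rewrite ?mul0r ?mulr0.
by exists k; first exact: b_supp.
Qed.

Section SupportPolynomial.
Variables (R : nzRingType) (n : nat) (S : {set 'I_n}).

Definition supp_poly (y : 'rV[R]_n) : {poly R} := \sum_(k in S) y 0 k *: 'X^k.

Definition supp_pow_col (t : R) : 'cV[R]_n :=
  \col_k (if k \in S then t ^+ k else 0).

Lemma supp_sub_pow_col t : supp_sub (supp_pow_col t) S.
Proof. by move=> k; rewrite mxE; case: ifP; rewrite ?eqxx. Qed.

Lemma mulmx_supp_pow_col (y : 'rV_n) t :
  (y *m supp_pow_col t) 0 0 = (supp_poly y).[t].
Proof.
rewrite mxE horner_sum [RHS]big_mkcond; apply: eq_bigr => k _.
by rewrite mxE hornerZ hornerXn; case: ifP; rewrite ?mulr0.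
Qed.

Lemma supp_poly_neq0 (y : 'rV_n) :
  (exists2 k, k \in S & y 0 k != 0) -> supp_poly y != 0.
Proof.
case=> k kS yk; apply: contra_neq yk => /(congr1 (coefp k)) /=.
rewrite coef0 coef_sum (bigD1 k) //= coefZ coefXn eqxx mulr1 big1 ?addr0 //.
by move=> j /andP[_ jk]; rewrite coefZ coefXn eq_sym val_eqE (negbTE jk) mulr0.
Qed.

End SupportPolynomial.

Lemma map_supp_pow_col (R K : nzRingType) (f : {rmorphism R -> K}) n
    (S : {set 'I_n}) t :
  map_mx f (supp_pow_col S t) = supp_pow_col S (f t).
Proof.
by apply/colP => k; rewrite !mxE; case: ifP; rewrite ?rmorph0 ?rmorphXn.
Qed.

Lemma exists_nat_nonroot (C : numDomainType) (p : {poly C}) :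
  p != 0 -> exists m : nat, ~~ root p m%:R.
Proof.
move=> p_neq0; pose rs := [seq (m%:R : C) | m <- iota 0 (size p)].
suff /allPn[_ /mapP[m _ ->] pm] : ~~ all (root p) rs by exists m.
apply/negP => p_rs.
have rs_uniq : uniq rs.
  by rewrite (map_inj_uniq (mulrIn (oner_neq0 C))) iota_uniq.
by have := max_poly_roots p_neq0 p_rs rs_uniq; rewrite size_map size_iota ltnn.
Qed.

Lemma exists_nat_common_nonroot (C : numDomainType) (I : finType)
    (p : I -> {poly C}) :
  (forall i, p i != 0) -> exists m : nat, forall i, ~~ root (p i) m%:R.
Proof.
move=> p_neq0; have [|m pm] := @exists_nat_nonroot _ (\prod_i p i).
  exact/prodf_neq0.
exists m => i; apply: contra pm; rewrite !rootE horner_prod => /eqP pim0.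
by rewrite (bigD1 i) //= pim0 mul0r.
Qed.

Lemma hermT_eq0 (C : numClosedFieldType) n (x : 'cV[C]_n) :
  (hermT x == 0) = (x == 0).
Proof.
apply/eqP/eqP => [/matrixP x0|->]; apply/matrixP => i j.
  by have /eqP := x0 j i; rewrite !mxE conjC_eq0 => /eqP->.
by rewrite !mxE conjC0.
Qed.

Lemma supp_meets_hermT (C : numClosedFieldType) n (x : 'cV[C]_n) S :
  supp_meets x S <-> exists2 k, k \in S & hermT x 0 k != 0.
Proof.
by split=> -[k kS xk]; exists k => //; move: xk; rewrite !mxE conjC_eq0.
Qed.

Lemma first_nonzero_pos_neq0 (C : numClosedFieldType) n (x : 'cV[C]_n) :
  first_nonzero_pos x -> x != 0.
Proof. by case=> k [xk _]; apply: contraTneq xk => ->; rewrite mxE ltxx. Qed.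

Theorem theorem1 (R : rcfType) (n : nat) (A : 'M[R]_n)
    (lambda : 'I_n -> R[i]) (x : 'I_n -> 'cV[R[i]]_n) (Sv : {set 'I_n}) :
  injective lambda ->
  (forall i, root (char_poly (cplx_mx A)) (lambda i)) ->
  (forall i, hermT (x i) *m cplx_mx A = lambda i *: hermT (x i)) ->
  (forall i, unit_norm (x i)) ->
  (forall i, first_nonzero_pos (x i)) ->
  (exists b : 'cV[R]_n, supp_sub b Sv /\ controllable A b) <->
  (forall i, supp_meets (x i) Sv).
Proof.
move=> lambda_inj _ xA _ x_pos.
have xH_neq0 i : hermT (x i) != 0 by rewrite hermT_eq0 first_nonzero_pos_neq0.
split=> [[b [b_supp b_ctrb]] i | x_meets].
  have bC_supp := supp_sub_map (f := real_complex R) b_supp.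
  apply/supp_meets_hermT/(supp_meets_of_mulmx bC_supp).
  apply: controllable_lefteigen_neq0 (xH_neq0 i) (xA i).
  exact/(controllable_map (real_complex R)).
have [m m_nonroot] := exists_nat_common_nonroot
  (fun i => supp_poly_neq0 ((supp_meets_hermT _ _).1 (x_meets i))).
exists (supp_pow_col Sv m%:R); split; first exact: supp_sub_pow_col.
apply/(controllable_map (real_complex R)).
apply: controllable_distinct_lefteigen lambda_inj xA _ => i.
rewrite (map_supp_pow_col (real_complex R)) rmorph_nat mulmx_supp_pow_col.
exact: m_nonroot.
Qed.
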